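(* Let $v\ge 2$, $l\ge 1$ and $t\ge 1$ be integers, put $n=vl$, and assume $n>2t-2$. Let $B$ be the set of sequences $\sigma\in\mathbb{Z}_v^n$ (indexed $0,\dots,n-1$) in which every symbol occurs exactly $l$ times, and choose $\sigma\in B$ uniformly at random. For $z\in\mathbb{Z}_v^t$ let $\lambda(z)=\#\{i\in\{0,\dots,n-1\}:\ \sigma((i+\iota)\,\%\,n)=z(\iota)\ \forall\,0\le\iota<t\}$. If $(z(i),\dots,z(t-1))\neq(z(0),\dots,z(t-1-i))$ for all $1\le i<t$, then $$\mathrm{VAR}(\lambda(z))=\frac{\prod_{a=0}^{v-1}(l)_{|z|_a}}{(n-1)_{t-1}}-\left(\frac{\prod_{a=0}^{v-1}(l)_{|z|_a}}{(n-1)_{t-1}}\right)^2+\frac{\prod_{a=0}^{v-1}(l)_{2|z|_a}}{(n-1)_{2t-2}}.$$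
   Context: $x\,\%\,n$ is the least nonnegative remainder modulo $n$. $(x)_m=x(x-1)\cdots(x-m+1)$ is the falling factorial. For $a\in\mathbb{Z}_v$, $|z|_a$ is the number of entries of $z$ equal to $a$. *)

From mathcomp Require Import all_boot all_order all_algebra.
Set Implicit Arguments. Unset Strict Implicit. Unset Printing Implicit Defensive.
Import GRing.Theory Num.Theory.
Local Open Scope ring_scope.

Definition cyc (n : nat) (i : 'I_n) (k : nat) : 'I_n :=
  Ordinal (ltn_pmod (i + k) (leq_ltn_trans (leq0n i) (ltn_ord i))).

Definition Bset (n v l : nat) : {set {ffun 'I_n -> 'I_v}} :=
  [set s : {ffun 'I_n -> 'I_v} | [forall a : 'I_v, #|[set i : 'I_n | s i == a]| == l]].

Definition lam (n v t : nat) (z : 'I_t -> 'I_v) (s : {ffun 'I_n -> 'I_v}) : nat :=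
  #|[set i : 'I_n | [forall k : 'I_t, s (cyc i k) == z k]]|.

Definition cnt (v t : nat) (z : 'I_t -> 'I_v) (a : 'I_v) : nat :=
  #|[set k : 'I_t | z k == a]|.

Arguments Bset n v l : clear implicits.

Definition Exp (n v l : nat) (f : {ffun 'I_n -> 'I_v} -> rat) : rat :=
  (\sum_(s in Bset n v l) f s) / (#|Bset n v l|)%:R.

Arguments Exp n v l f : clear implicits.

Definition Var (n v l : nat) (f : {ffun 'I_n -> 'I_v} -> rat) : rat :=
  Exp n v l (fun s => f s ^+ 2) - (Exp n v l f) ^+ 2.

Arguments Var n v l f : clear implicits.

Definition zseq (v t : nat) (z : 'I_t -> 'I_v) : seq 'I_v := [seq z k | k <- enum 'I_t].

From mathcomp Require Import all_boot all_order all_algebra.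
From mathcomp Require Import fingroup perm action primitive_action alt.
From mathcomp Require Import zify.
Import GRing.Theory Num.Theory.
Set Implicit Arguments. Unset Strict Implicit. Unset Printing Implicit Defensive.

(* [lam z] counts the cyclic windows of [sigma] spelling [z], so the first two
   moments of [lam z] are sums, over one window or over a pair of windows, of
   the number of [sigma] in [B] carrying prescribed symbols at prescribed
   distinct positions.  Permutations of the positions preserve [B], so that
   number depends only on how many positions k are prescribed; adding them one
   at a time shows it equals #|B| * prod_a (l)_(c_a) / (n)_k, where c_a is the
   number of prescribed copies of a.  Since [z] has no self-overlap, two
   distinct overlapping windows never both spell [z]; the n (n - 2t + 1)
   ordered pairs of disjoint windows give the last term of the variance. *)

Lemma perm_map_uniq (T : finType) (ps qs : seq T) :
  uniq ps -> uniq qs -> size ps = size qs -> exists p : {perm T}, map p ps = qs.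
Proof.
move=> ups uqs sz.
have le_ps : size ps <= #|T| by rewrite -(card_uniqP ups) max_card.
have tr := ntransitive_weak le_ps (Sym_trans T).
have sz' : size qs == size ps by rewrite sz.
have dp : in_tuple ps \in (size ps).-dtuple(setT) by rewrite inE ups; apply/subsetP.
have dq : Tuple sz' \in (size ps).-dtuple(setT) by rewrite inE uqs; apply/subsetP.
have [p _ /(congr1 val) /= ->] := atransP2 tr dp dq.
by exists p; apply: eq_map.
Qed.

Section Matchings.

Variables n v l : nat.

Definition nmatch (ps : seq 'I_n) (ys : seq 'I_v) : nat :=
  \sum_(s in Bset n v l) (map s ps == ys).

Lemma Bset_comp_perm (p : {perm 'I_n}) (s : {ffun 'I_n -> 'I_v}) :
  ([ffun i => s (p i)] \in Bset n v l) = (s \in Bset n v l).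
Proof.
rewrite !inE; apply: eq_forallb => a.
have -> : [set i | [ffun i => s (p i)] i == a] = p @^-1: [set i | s i == a].
  by apply/setP => i; rewrite !inE ffunE.
by rewrite card_preimset //; apply: perm_inj.
Qed.

Lemma nmatch_perm (ps qs : seq 'I_n) (ys : seq 'I_v) :
  uniq ps -> uniq qs -> size ps = size qs -> nmatch ps ys = nmatch qs ys.
Proof.
move=> ups uqs sz; have [p <-] := perm_map_uniq uqs ups (esym sz).
pose sp (s : {ffun 'I_n -> 'I_v}) := [ffun i => s (p i)].
have sp_inj : injective sp.
  move=> s1 s2 e; apply/ffunP => i.
  by have := congr1 (fun s : {ffun _ -> _} => s ((p^-1)%g i)) e; rewrite !ffunE permKV.
rewrite /nmatch [RHS](reindex_inj sp_inj) /=.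
apply: eq_big => [s|s _]; first by rewrite Bset_comp_perm.
by rewrite -map_comp; congr (_ == _); apply: eq_map => i; rewrite /= ffunE.
Qed.

Lemma sum_symbol_Bset (s : {ffun 'I_n -> 'I_v}) b :
  s \in Bset n v l -> \sum_i (s i == b : nat) = l.
Proof.
rewrite inE => /forallP /(_ b) /eqP <-; rewrite -sum1_card [RHS]big_mkcond /=.
by apply: eq_bigr => i _; rewrite inE; case: (s i == b).
Qed.

Lemma sum_symbol_notin (s : {ffun 'I_n -> 'I_v}) (ps : seq 'I_n) (ys : seq 'I_v) b :
  s \in Bset n v l -> uniq ps -> map s ps = ys ->
  \sum_(j | j \notin ps) (s j == b : nat) = l - count_mem b ys.
Proof.
move=> sB ups <-; rewrite -(sum_symbol_Bset b sB) [in RHS](bigID (mem ps)) /= -big_uniq //.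
have -> : \sum_(i <- ps) (s i == b : nat) = count_mem b (map s ps).
  by rewrite count_map -sum1_count [RHS]big_mkcond.
by rewrite addKn.
Qed.

(* By [nmatch_perm], the left-hand side sums the matchings extended at any free
   position j; each matching [s] of [ps] has exactly [l - count_mem b ys] free
   positions j with [s j = b]. *)
Lemma nmatch_rcons (ps : seq 'I_n) (ys : seq 'I_v) i b :
  uniq (rcons ps i) -> size ps = size ys ->
  nmatch (rcons ps i) (rcons ys b) * (n - size ps) = (l - count_mem b ys) * nmatch ps ys.
Proof.
move=> u sz; have ups : uniq ps by move: u; rewrite rcons_uniq => /andP[].
have card_notin : #|[predC ps]| = n - size ps.
  have := cardC (mem ps); rewrite card_ord (card_uniqP ups) => total.
  by rewrite -[X in _ = X - _]total addKn.
have -> : nmatch (rcons ps i) (rcons ys b) * (n - size ps)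
          = \sum_(j | j \notin ps) nmatch (rcons ps j) (rcons ys b).
  rewrite -card_notin mulnC -sum_nat_const; apply: eq_big => // j notin_j.
  by apply: nmatch_perm; rewrite ?size_rcons // rcons_uniq ups andbT.
rewrite /nmatch exchange_big big_distrr /=; apply: eq_bigr => s sB.
under eq_bigr do rewrite map_rcons eqseq_rcons.
case: eqP => [sps|_] /=; last by rewrite muln0 big1.
by rewrite muln1 (sum_symbol_notin b sB ups sps).
Qed.

Lemma nmatch_ffact (ps : seq 'I_n) (ys : seq 'I_v) :
  uniq ps -> size ps = size ys ->
  nmatch ps ys * n ^_ (size ps) = #|Bset n v l| * \prod_(a < v) l ^_ (count_mem a ys).
Proof.
elim/last_ind: ps ys => [|ps i IH] ys.
  case: ys => // _ _; rewrite ffactn0 muln1 [X in _ * X]big1 ?muln1 // -sum1_card.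
  exact: eq_bigr.
case/lastP: ys => [|ys b]; first by rewrite size_rcons.
rewrite !size_rcons => u [sz].
have ups : uniq ps by move: u; rewrite rcons_uniq => /andP[].
rewrite ffactnSr mulnA mulnAC (nmatch_rcons b u sz) -mulnA (IH ys ups sz).
rewrite mulnCA; congr (_ * _).
rewrite (bigD1 b) //= [in RHS](bigD1 b) //= -cats1 count_cat /= eqxx addn1 ffactnSr.
rewrite mulnA (mulnC (l - _)); congr (_ * _); apply: eq_bigr => a neq_ab.
by rewrite count_cat /= eq_sym (negbTE neq_ab) !addn0.
Qed.

End Matchings.

Section Windows.

Variable n : nat.
Implicit Types (i : 'I_n) (d k : nat).

Lemma cycE i k : val (cyc i k) = (i + k) %% n.
Proof. by []. Qed.

Lemma cyc0 i : cyc i 0 = i.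
Proof. by apply: val_inj; rewrite cycE addn0 modn_small. Qed.

Lemma cycD i d k : cyc (cyc i d) k = cyc i (d + k).
Proof. by apply: val_inj; rewrite !cycE modnDml addnA. Qed.

Lemma cyc_subnK i d : d <= n -> cyc (cyc i d) (n - d) = i.
Proof. by move=> le_dn; apply: val_inj; rewrite cycD cycE subnKC // modnDr modn_small. Qed.

Lemma cyc_inj i : {in [pred k | k < n] &, injective (cyc i)}.
Proof.
move=> k k' lt_kn lt_k'n /(congr1 val) /eqP; rewrite !cycE eqn_modDl.
by rewrite !modn_small // => /eqP.
Qed.

Definition window t i : seq 'I_n := map (cyc i) (iota 0 t).

Lemma size_window t i : size (window t i) = t.
Proof. by rewrite size_map size_iota. Qed.

Lemma uniq_map_cyc i (ks : seq nat) :
  uniq ks -> all [pred k | k < n] ks -> uniq (map (cyc i) ks).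
Proof.
move=> uks /allP ks_lt; rewrite map_inj_in_uniq // => k k' /ks_lt + /ks_lt.
exact: cyc_inj.
Qed.

Lemma uniq_window t i : t <= n -> uniq (window t i).
Proof.
move=> le_tn; apply: uniq_map_cyc; first exact: iota_uniq.
by apply/allP => k; rewrite mem_iota /=; lia.
Qed.

Lemma uniq_window_cat t i d :
  t <= d -> d + t <= n -> uniq (window t i ++ window t (cyc i d)).
Proof.
move=> le_td le_dtn.
have -> : window t i ++ window t (cyc i d) = map (cyc i) (iota 0 t ++ iota d t).
  rewrite map_cat -{2}(addn0 d) iotaDl -map_comp; congr (_ ++ _).
  by apply: eq_map => k /=; rewrite cycD.
apply: uniq_map_cyc.
  by rewrite cat_uniq !iota_uniq andbT /=; apply/hasPn => k; rewrite !mem_iota; lia.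
by apply/allP => k; rewrite mem_cat !mem_iota /=; lia.
Qed.

Lemma overlap_drop_take v t (s : {ffun 'I_n -> 'I_v}) (zs : seq 'I_v) i d :
  0 < d < t -> map s (window t i) = zs -> map s (window t (cyc i d)) = zs ->
  drop d zs = take (t - d) zs.
Proof.
move=> lt0dt occ_i occ_id; have zs_size : size zs = t by rewrite -occ_i size_map size_window.
apply: (@eq_from_nth _ (s i)) => [|m]; first by rewrite size_drop size_take zs_size ifT //; lia.
rewrite size_drop zs_size => lt_m; rewrite nth_drop nth_take //.
rewrite -{1}occ_i -occ_id /window -!map_comp !(nth_map 0) ?size_iota; try lia.
by rewrite /= !nth_iota ?cycD ?add0n //; lia.
Qed.

End Windows.

Definition overlap_free (T : eqType) (zs : seq T) :=
  forall d, 0 < d < size zs -> drop d zs != take (size zs - d) zs.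

Section Occurrences.

Variables (n v l t : nat) (zs : seq 'I_v).
Hypotheses (zs_size : size zs = t) (zs_free : overlap_free zs).

Definition njoint (i j : 'I_n) : nat :=
  \sum_(s in Bset n v l) ((map s (window t i) == zs) && (map s (window t j) == zs)).

Lemma njointC i j : njoint i j = njoint j i.
Proof. by apply: eq_bigr => s _; rewrite andbC. Qed.

Lemma njoint_overlap i d : 0 < d < t -> njoint i (cyc i d) = 0.
Proof.
move=> lt0dt; apply: big1 => s _; case: eqP => // occ_i; case: eqP => // occ_id.
have lt_d_size : 0 < d < size zs by rewrite zs_size.
move/eqP: (overlap_drop_take lt0dt occ_i occ_id).
by rewrite -zs_size (negbTE (zs_free lt_d_size)).
Qed.

Lemma njoint_disjoint i d : njoint i (cyc i d) =
  nmatch l (window t i ++ window t (cyc i d)) (zs ++ zs).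
Proof.
apply: eq_bigr => s _.
by rewrite map_cat eqseq_cat // size_map size_window zs_size.
Qed.

(* For [j = cyc i d], the shifts 0 < d < t and n - t < d < n give overlapping
   windows, which cannot both spell the overlap-free [zs]. *)
Lemma sum_njoint i : 0 < t -> t + t <= n + 1 ->
  \sum_j njoint i j = nmatch l (window t i) zs
    + \sum_(t <= d < n - t + 1) nmatch l (window t i ++ window t (cyc i d)) (zs ++ zs).
Proof.
move=> t_gt0 le_2t_n1.
have cyc_i_inj : injective (fun d : 'I_n => cyc i d).
  by move=> d d' /(@cyc_inj n i d d' (ltn_ord d) (ltn_ord d')) /val_inj.
rewrite (reindex_inj cyc_i_inj) /= -(big_mkord xpredT (fun d => njoint i (cyc i d))).
rewrite (@big_cat_nat _ _ _ 1 0 n) //=; last lia.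
rewrite big_nat1 (@big_cat_nat _ _ _ t 1 n) //=; try lia.
rewrite (@big_cat_nat _ _ _ (n - t + 1) t n) //=; try lia.
rewrite big_nat_cond big1 ?add0n => [|d /andP[lt_d _]]; last exact: njoint_overlap.
rewrite [X in _ + (_ + X)]big_nat_cond [X in _ + (_ + X)]big1 ?addn0 => [|d /andP[lt_d _]].
  rewrite cyc0; congr (_ + _); last by apply: eq_bigr => d _; rewrite njoint_disjoint.
  by apply: eq_bigr => s _; rewrite andbb.
rewrite njointC -{2}[i](@cyc_subnK n i d) ?njoint_overlap //; lia.
Qed.

End Occurrences.

Lemma size_zseq v t (z : 'I_t -> 'I_v) : size (zseq z) = t.
Proof. by rewrite size_map size_enum_ord. Qed.

Lemma cnt_count_mem v t (z : 'I_t -> 'I_v) a : cnt z a = count_mem a (zseq z).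
Proof. by rewrite /cnt -sum1dep_card /zseq count_map -sum1_count big_enum_cond. Qed.

Lemma lamE n v t (z : 'I_t -> 'I_v) (s : {ffun 'I_n -> 'I_v}) :
  lam z s = \sum_(i : 'I_n) (map s (window t i) == zseq z : nat).
Proof.
rewrite /lam -sum1dep_card big_mkcond /=; apply: eq_bigr => i _.
have -> : map s (window t i) = [seq s (cyc i k) | k : 'I_t <- enum 'I_t].
  by rewrite /window -val_enum_ord -!map_comp.
congr (nat_of_bool _); apply/forallP/eqP => [occ | /eq_in_map occ k].
  by apply/eq_in_map => k _; apply/eqP/occ.
by apply/eqP/occ; rewrite mem_enum.
Qed.

Lemma card_Bset_gt0 v l : 0 < #|Bset (v * l) v l|.
Proof.
have v_gt0 (i : 'I_(v * l)) : 0 < v.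
  by move: (leq_ltn_trans (leq0n i) (ltn_ord i)); rewrite muln_gt0 => /andP[].
pose s0 := [ffun i : 'I_(v * l) => Ordinal (ltn_pmod i (v_gt0 i))].
apply/card_gt0P; exists s0; rewrite inE; apply/forallP => a.
have v_gt0' : 0 < v := leq_ltn_trans (leq0n a) (ltn_ord a).
have lt_rva (r : 'I_l) : r * v + a < v * l.
  by have := ltn_ord a; have := ltn_ord r; nia.
pose f (r : 'I_l) : 'I_(v * l) := Ordinal (lt_rva r).
have f_inj : injective f.
  by move=> r r' /(congr1 val) /= /eqP; rewrite eqn_add2r eqn_pmul2r // => /eqP /val_inj.
have -> : [set i | s0 i == a] = f @: setT.
  apply/setP => i; rewrite inE ffunE; apply/eqP/imsetP => [eq_a | [r _ ->]].
    have lt_iv_l : i %/ v < l by rewrite ltn_divLR // [l * v]mulnC.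
    by exists (Ordinal lt_iv_l) => //; apply: val_inj; rewrite /= -eq_a /= -divn_eq.
  by apply: val_inj; rewrite /= modnMDl modn_small.
by rewrite card_imset // cardsT card_ord.
Qed.

Lemma sum_count_mem v (ys : seq 'I_v) : \sum_(a < v) count_mem a ys = size ys.
Proof.
elim: ys => [|y ys IH] /=; first by rewrite big1.
rewrite big_split /= IH (bigD1 y) //= eqxx big1 ?addn0 ?add1n // => a /negbTE.
by rewrite eq_sym => ->.
Qed.

Lemma prod_ffact_count_eq0 v l (ys : seq 'I_v) :
  v * l < size ys -> \prod_(a < v) l ^_ (count_mem a ys) = 0.
Proof.
move=> lt_vl_ys; case: (pickP [pred a : 'I_v | l < count_mem a ys]) => [a lt_l_a | le_l].
  by rewrite (bigD1 a) //= ffact_small.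
suff : size ys <= v * l by rewrite leqNgt lt_vl_ys.
rewrite -sum_count_mem -[v in v * l]card_ord -sum_nat_const.
by apply: leq_sum => a _; rewrite leqNgt (negbT (le_l a)).
Qed.

Lemma divr_natE (R : numFieldType) a b c d :
  0 < b -> 0 < d -> a * d = b * c -> (a%:R / b%:R = c%:R / d%:R :> R)%R.
Proof.
move=> b_gt0 d_gt0 eq_ad_bc; apply/eqP.
by rewrite eqr_div ?pnatr_eq0 -?lt0n // -!natrM eq_ad_bc mulnC.
Qed.

Section Moments.

Variables (v l t : nat) (z : 'I_t -> 'I_v).
Local Notation n := (v * l).
Local Notation zs := (zseq z).
Local Notation B := (Bset n v l).
Hypotheses (t_gt0 : 0 < t) (lt_2t2_n : 2 * t - 2 < n) (z_free : overlap_free zs).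

Let P := \prod_(a < v) l ^_ (cnt z a).
Let Q := \prod_(a < v) l ^_ (2 * cnt z a).

Definition ndisjoint : nat :=
  \sum_(i : 'I_n) \sum_(t <= d < n - t + 1)
      nmatch l (window t i ++ window t (cyc i d)) (zs ++ zs).

Lemma sum_lam : \sum_(s in B) lam z s = \sum_(i : 'I_n) nmatch l (window t i) zs.
Proof. by under eq_bigr do rewrite lamE; rewrite exchange_big. Qed.

Lemma sum_lam_ffact : (\sum_(s in B) lam z s) * (n.-1) ^_ t.-1 = #|B| * P.
Proof.
have n_gt0 : 0 < n by lia.
have ffact_t : n ^_ t = n * (n.-1) ^_ t.-1 by rewrite -ffactnS prednK.
have le_tn : t <= n by lia.
have : (\sum_(s in B) lam z s) * n ^_ t = n * (#|B| * P).
  rewrite sum_lam big_distrl /= (eq_bigr (fun=> #|B| * P)) ?sum_nat_const ?card_ord // => i _.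
  rewrite -[in n ^_ t](size_window t i) nmatch_ffact ?uniq_window ?size_window ?size_zseq //.
  by congr (_ * _); apply: eq_bigr => a _; rewrite cnt_count_mem.
by rewrite ffact_t mulnCA => /eqP; rewrite eqn_pmul2l // => /eqP.
Qed.

Lemma sum_lam_sq : \sum_(s in B) lam z s ^ 2 = \sum_(s in B) lam z s + ndisjoint.
Proof.
rewrite sum_lam /ndisjoint -big_split /=.
under eq_bigr do rewrite lamE expnS expn1 big_distrl /=.
rewrite exchange_big; apply: eq_bigr => i _.
under eq_bigr do rewrite big_distrr /=.
rewrite exchange_big -sum_njoint ?size_zseq //; last lia.
by apply: eq_bigr => j _; apply: eq_bigr => s _; rewrite mulnb.
Qed.

Lemma ndisjoint_ffact : ndisjoint * (n.-1) ^_ (2 * t - 2) = #|B| * Q.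
Proof.
have Q_count : Q = \prod_(a < v) l ^_ (count_mem a (zs ++ zs)).
  by apply: eq_bigr => a _; rewrite count_cat cnt_count_mem addnn mul2n.
have [lt_n_2t | le_2t_n] := ltnP n (t + t).
  rewrite Q_count prod_ffact_count_eq0 ?size_cat ?size_zseq // muln0.
  by rewrite /ndisjoint big1 // => i _; rewrite big_geq //; lia.
set m := n - t + 1 - t.
have m_gt0 : 0 < m by lia.
have ffact_2t : n ^_ (t + t) = n * m * (n.-1) ^_ (2 * t - 2).
  have -> : t + t = (2 * t - 2).+2 by lia.
  have -> : m = n.-1 - (2 * t - 2) by lia.
  by rewrite ffactnS ffactnSr mulnA mulnAC.
have : ndisjoint * n ^_ (t + t) = n * m * (#|B| * Q).
  rewrite /ndisjoint big_distrl /= (eq_bigr (fun=> m * (#|B| * Q))); last first.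
    move=> i _; rewrite big_distrl /= -sum_nat_const_nat.
    apply: eq_big_nat => d /andP[le_td lt_d].
    have sz : size (window t i ++ window t (cyc i d)) = size (zs ++ zs).
      by rewrite !size_cat !size_window size_zseq.
    have uniq_ii : uniq (window t i ++ window t (cyc i d)).
      by apply: uniq_window_cat => //; lia.
    by have := nmatch_ffact l uniq_ii sz; rewrite size_cat !size_window -Q_count.
  by rewrite sum_nat_const card_ord mulnA.
rewrite ffact_2t mulnCA => /eqP; rewrite eqn_pmul2l ?muln_gt0 ?m_gt0 ?andbT //; last lia.
by move/eqP.
Qed.

Local Open Scope ring_scope.

Lemma Exp_lam : Exp n v l (fun s => (lam z s)%:R) = P%:R / ((n.-1) ^_ t.-1)%:R.
Proof.
rewrite /Exp -natr_sum; apply: divr_natE; rewrite ?card_Bset_gt0 ?sum_lam_ffact //.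
by rewrite ffact_gt0; lia.
Qed.

Lemma Exp_lam_sq : Exp n v l (fun s => (lam z s)%:R ^+ 2)
  = Exp n v l (fun s => (lam z s)%:R) + Q%:R / ((n.-1) ^_ (2 * t - 2))%:R.
Proof.
rewrite /Exp (eq_bigr (fun s => (lam z s ^ 2)%:R)) => [|s _]; last by rewrite natrX.
rewrite -!natr_sum sum_lam_sq natrD mulrDl; congr (_ + _).
apply: divr_natE; rewrite ?card_Bset_gt0 ?ndisjoint_ffact //.
by rewrite ffact_gt0; lia.
Qed.

End Moments.

Local Open Scope ring_scope.
Unset Implicit Arguments.

Theorem corollary4 (v l t : nat) (z : 'I_t -> 'I_v) :
  (2 <= v)%N -> (1 <= l)%N -> (1 <= t)%N -> (2 * t - 2 < v * l)%N ->
  (forall i : nat, (1 <= i < t)%N -> drop i (zseq z) != take (t - i) (zseq z)) ->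
  let n := (v * l)%N in
  let P := (\prod_(a < v) l ^_ (cnt z a))%N in
  let Q := (\prod_(a < v) l ^_ (2 * cnt z a))%N in
  Var n v l (fun s => (lam z s)%:R)
  = P%:R / ((n.-1) ^_ t.-1)%:R - (P%:R / ((n.-1) ^_ t.-1)%:R) ^+ 2
    + Q%:R / ((n.-1) ^_ (2 * t - 2))%:R.
Proof.
move=> _ _ t_gt0 lt_2t2_n no_overlap n P Q.
have z_free : overlap_free (zseq z) by rewrite /overlap_free size_zseq.
by rewrite /Var (Exp_lam_sq t_gt0 lt_2t2_n z_free) (Exp_lam z t_gt0 lt_2t2_n) addrAC.
Qed.
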